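(* Let $R$ be a binary relation on a set $A$ satisfying $\mathbf{WFminDNE}$. (1) If accessibility is $\lnot\lnot$-closed ($\mathbf{accDNE}$), then $R$ satisfies $\mathbf{WFacc}$. (2) If for every $f:\mathbb{N}\to A$ the image predicate $x\mapsto \exists k.\, f(k)\equiv x$ is $\lnot\lnot$-closed ($\mathbf{MP}_\equiv$), then $R$ satisfies $\mathbf{WFseq}$.
   Context: Work in constructive (intuitionistic) logic / Martin-Löf type theory without excluded middle or other axioms. Let $R$ be a binary relation on $A$; $\equiv$ is identity. Accessibility is defined inductively: $x$ is accessible if every $y$ with $R\,y\,x$ is accessible. For $P\subseteq A$: $x$ is $P$-minimal if $x\in P$ and for all $y$, $R\,y\,x$ implies $y\notin P$; $P$ is $\lnot\lnot$-closed if $\lnot\lnot(x\in P)$ implies $x\in P$ for all $x$; $P$ is nonempty if some $x\in P$. $\mathbf{WFminDNE}$: every nonempty $\lnot\lnot$-closed $P\subseteq A$ has a $P$-minimal element. $\mathbf{WFacc}$: every $x\in A$ is accessible. $\mathbf{WFseq}$: for every $s:\mathbb{N}\to A$ there is $k$ with $\lnot R\,(s(k+1))\,(s(k))$. $\mathbf{accDNE}$: for all $x$, $\lnot\lnot(x$ accessible$)$ implies $x$ accessible. *)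

Definition minimal {A : Type} (R : A -> A -> Prop) (P : A -> Prop) (x : A) : Prop :=
  P x /\ forall y, R y x -> ~ P y.

Definition dne_closed {A : Type} (P : A -> Prop) : Prop :=
  forall x, ~ ~ P x -> P x.

Definition nonempty {A : Type} (P : A -> Prop) : Prop := exists x, P x.

Definition WFminDNE {A : Type} (R : A -> A -> Prop) : Prop :=
  forall P : A -> Prop, nonempty P -> dne_closed P -> exists x, minimal R P x.

Definition WFacc {A : Type} (R : A -> A -> Prop) : Prop :=
  forall x : A, Acc R x.

Definition WFseq {A : Type} (R : A -> A -> Prop) : Prop :=
  forall s : nat -> A, exists k : nat, ~ R (s (S k)) (s k).

Definition accDNE {A : Type} (R : A -> A -> Prop) : Prop :=
  dne_closed (Acc R).

Definition MP_eq (A : Type) : Prop :=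
  forall f : nat -> A, dne_closed (fun x => exists k : nat, f k = x).


(* Both parts apply [WFminDNE] to a predicate that is ¬¬-closed for free or by
   hypothesis: the inaccessible elements (negations are always ¬¬-closed), and
   the image of the sequence.  A minimal inaccessible element would have only
   ¬¬-accessible, hence accessible, predecessors; a minimal element [s k] of
   the image cannot have [s (S k)] below it. *)

Lemma dne_closed_not {A : Type} (P : A -> Prop) : dne_closed (fun x => ~ P x).
Proof. intros x Hnn HP. apply Hnn. intro Hn. exact (Hn HP). Qed.

Lemma WFminDNE_accDNE_WFacc {A : Type} (R : A -> A -> Prop) :
  WFminDNE R -> accDNE R -> WFacc R.
Proof.
  intros HWF Hacc x. apply Hacc. intro Hx.
  destruct (HWF (fun z => ~ Acc R z)) as [m [Hm Hmin]].
  - exists x. exact Hx.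
  - apply dne_closed_not.
  - apply Hm. constructor. intros y Hy. apply Hacc. exact (Hmin y Hy).
Qed.

Lemma WFminDNE_no_descent {A : Type} (R : A -> A -> Prop) (s : nat -> A) :
  WFminDNE R -> dne_closed (fun x => exists k, s k = x) ->
  exists k, ~ R (s (S k)) (s k).
Proof.
  intros HWF Himg.
  destruct (HWF (fun x => exists k, s k = x)) as [m [[k <-] Hmin]].
  - exists (s 0), 0. reflexivity.
  - exact Himg.
  - exists k. intro Hdesc. apply (Hmin _ Hdesc). exists (S k). reflexivity.
Qed.

Theorem mainTheorem15 (A : Type) (R : A -> A -> Prop) (HWF : WFminDNE R) :
  (accDNE R -> WFacc R) /\ (MP_eq A -> WFseq R).
Proof.
  split.
  - exact (WFminDNE_accDNE_WFacc R HWF).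
  - intros Hmp s. exact (WFminDNE_no_descent R s HWF (Hmp s)).
Qed.
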